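(* Consider the ordinary differential system \[ x'=-x+x^2+y^2,\qquad y'=y(x+y), \] and assume $|x(0)|\leq \varepsilon$, $|y(0)|\leq \delta\leq \varepsilon$. Then for $\varepsilon,\delta$ small enough there exists $c>0$ such that the solution of this system exists on a time interval $[0,T]$ with $T\geq c/\delta$.
   Context: $x,y$ are real-valued unknown functions of $t\geq 0$. The system is a toy model for the Euler–Korteweg system with small vorticity: $x$ plays the role of the dispersive part and $y$ that of the solenoidal part of the velocity. *)

From Stdlib Require Import Reals.
From Coquelicot Require Import Coquelicot.
Open Scope R_scope.

(* (x, y) solves  x' = -x + x^2 + y^2,  y' = y (x + y)  on [0, T]
   with initial data (x0, y0). Derivatives are (two-sided) derivatives
   of functions defined on R, required at every t in [0, T]. *)
Definition solves_on (T x0 y0 : R) (x y : R -> R) : Prop :=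
  x 0 = x0 /\ y 0 = y0 /\
  forall t, 0 <= t <= T ->
    is_derive x t (- x t + (x t)^2 + (y t)^2) /\
    is_derive y t (y t * (x t + y t)).

From Stdlib Require Import Reals Lra Lia Psatz Factorial.
From Coquelicot Require Import Coquelicot.
Open Scope R_scope.

(* Truncating the vector field (x to [-1/2, 1/2], y to [-2 delta, 2 delta]) makes it globally
   Lipschitz, so the truncated system has a solution on every [0, T] by Picard iteration.
   For T = 1 / (12 delta) the truncation is never active.  Indeed e^t x is nondecreasing, and
   e^{t/2} x + 2 eps e^{-t/2} - 2 b^2 e^{t/2} (b = 2 delta) is nonincreasing, which gives
   |x| <= 3 eps e^{-t/2} + 2 b^2.  This bound has integral O(eps + delta) over [0, T], so
   (y^2)' <= 2 y^2 (|x| + b) yields y^2 <= y(0)^2 e^{Q(t)} with Q <= 1 on [0, T].  Hence the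
   truncated solution stays in the box and solves the original system. *)

(** * Clamping, Lipschitz functions and integrals *)

Definition clamp (a b u : R) : R := Rmax a (Rmin b u).

Lemma clamp_id a b u : a <= u <= b -> clamp a b u = u.
Proof. intros; unfold clamp, Rmax, Rmin; repeat destruct Rle_dec; lra. Qed.

Lemma clamp_in a b u : a <= b -> a <= clamp a b u <= b.
Proof. intros; unfold clamp, Rmax, Rmin; repeat destruct Rle_dec; lra. Qed.

Lemma Rabs_clamp_le a b u : a <= 0 <= b -> Rabs (clamp a b u) <= Rabs u.
Proof.
  intros; unfold clamp, Rmax, Rmin; repeat destruct Rle_dec; unfold Rabs;
    repeat destruct Rcase_abs; lra.
Qed.

Lemma clamp_sub_le a b u v : Rabs (clamp a b u - clamp a b v) <= Rabs (u - v).
Proof.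
  unfold clamp, Rmax, Rmin; repeat destruct Rle_dec; unfold Rabs;
    repeat destruct Rcase_abs; lra.
Qed.

Definition lipschitz2 (G : R -> R -> R) (K : R) : Prop :=
  forall u v u' v', Rabs (G u v - G u' v') <= K * (Rabs (u - u') + Rabs (v - v')).

Lemma lipschitz2_continuous G K (a b : R -> R) s :
  0 <= K -> lipschitz2 G K -> continuous a s -> continuous b s ->
  continuous (fun s => G (a s) (b s)) s.
Proof.
  intros HK HG Ha Hb.
  apply continuity_pt_filterlim in Ha; apply continuity_pt_filterlim in Hb.
  apply continuity_pt_filterlim; intros e He.
  assert (He' : 0 < e / (2 * (K + 1))) by (apply Rdiv_lt_0_compat; lra).
  destruct (Ha _ He') as [da [Hda Ha']]; destruct (Hb _ He') as [db [Hdb Hb']].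
  exists (Rmin da db); split; [now apply Rmin_glb_lt|].
  intros x [Hx Hd]; simpl in *; unfold R_dist in *.
  specialize (Ha' x (conj Hx (Rlt_le_trans _ _ _ Hd (Rmin_l _ _)))).
  specialize (Hb' x (conj Hx (Rlt_le_trans _ _ _ Hd (Rmin_r _ _)))).
  simpl in *; unfold R_dist in *.
  eapply Rle_lt_trans; [apply HG|].
  apply Rle_lt_trans with (K * (2 * (e / (2 * (K + 1))))); [apply Rmult_le_compat_l; lra|].
  replace (K * (2 * (e / (2 * (K + 1))))) with (e - e / (K + 1)) by (field; lra).
  assert (0 < e / (K + 1)) by (apply Rdiv_lt_0_compat; lra); lra.
Qed.

Lemma continuous_clamp a b t : continuous (clamp a b) t.
Proof.
  apply (lipschitz2_continuous (fun u _ => clamp a b u) 1 id id t);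
    [lra| |apply continuous_id|apply continuous_id].
  intros u v u' v'; generalize (clamp_sub_le a b u u') (Rabs_pos (v - v')); lra.
Qed.

Lemma continuous_Rabs_sub (u v : R -> R) (s : R) :
  continuous u s -> continuous v s -> continuous (fun s => Rabs (u s - v s)) s.
Proof. intros Hu Hv; apply continuous_Rabs_comp, (continuous_minus u v); auto. Qed.

Lemma ex_RInt_continuous_all (f : R -> R) a b :
  (forall s, continuous f s) -> ex_RInt f a b.
Proof. intros Hf; apply (@ex_RInt_continuous R_CompleteNormedModule); auto. Qed.

Lemma is_derive_plus_RInt (h : R -> R) c t :
  (forall s, continuous h s) -> is_derive (fun t => c + RInt h 0 t) t (h t).
Proof.
  intros Hh; rewrite <- (Rplus_0_l (h t)).
  apply (is_derive_plus (fun _ => c)); [apply (is_derive_const c)|].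
  apply is_derive_RInt with (a := 0); [|apply Hh].
  apply filter_forall; intros.
  apply (@RInt_correct R_CompleteNormedModule), ex_RInt_continuous_all, Hh.
Qed.

Lemma continuous_plus_RInt (h : R -> R) c t :
  (forall s, continuous h s) -> continuous (fun t => c + RInt h 0 t) t.
Proof.
  intros Hh; apply (@ex_derive_continuous R_AbsRing R_NormedModule).
  eexists; now apply is_derive_plus_RInt.
Qed.

Lemma Rabs_RInt_sub_le (f g k : R -> R) a b :
  a <= b -> ex_RInt f a b -> ex_RInt g a b -> ex_RInt k a b ->
  (forall s, a < s < b -> Rabs (f s - g s) <= k s) ->
  Rabs (RInt f a b - RInt g a b) <= RInt k a b.
Proof.
  intros Hab If Ig Ik H.
  assert (Hf : RInt f a b <= RInt (fun s => g s + k s) a b).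
  { apply RInt_le; auto; [now apply (ex_RInt_plus g k)|].
    intros s Hs; specialize (H s Hs); apply Rabs_le_between in H; lra. }
  assert (Hg : RInt g a b <= RInt (fun s => f s + k s) a b).
  { apply RInt_le; auto; [now apply (ex_RInt_plus f k)|].
    intros s Hs; specialize (H s Hs); apply Rabs_le_between in H; lra. }
  rewrite (RInt_plus g k) in Hf by assumption; rewrite (RInt_plus f k) in Hg by assumption.
  unfold plus in Hf, Hg; simpl in Hf, Hg; apply Rabs_le_between; lra.
Qed.

Lemma RInt_scal_pow c n t : RInt (fun s => c * s ^ n) 0 t = c * t ^ S n / INR (S n).
Proof.
  apply is_RInt_unique.
  replace (c * t ^ S n / INR (S n)) with (scal c (t ^ S n / INR (S n) - 0 ^ S n / INR (S n))).
  - apply (is_RInt_scal (fun s => s ^ n)), is_RInt_pow.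
  - assert (INR (S n) <> 0) by (apply not_0_INR; lia).
    rewrite pow_i by lia; unfold scal; simpl; unfold mult; simpl; field; auto.
Qed.

(** * Picard iteration for globally Lipschitz planar systems *)

Lemma ex_series_exp_terms c x : ex_series (fun n => c * x ^ n / INR (fact n)).
Proof.
  apply (ex_series_ext (fun n => scal c (scal (pow_n x n) (/ INR (fact n))))).
  - intros n; rewrite pow_n_pow; unfold scal; simpl; unfold mult; simpl; field.
    apply INR_fact_neq_0.
  - apply (ex_series_scal_l c (fun n => scal (pow_n x n) (/ INR (fact n)))).
    eexists; apply is_exp_Reals.
Qed.

Lemma Rabs_sub_le_sum_n_m (f a : nat -> R) :
  (forall n, Rabs (f (S n) - f n) <= a n) ->
  forall n m, (n <= m)%nat -> Rabs (f (S m) - f n) <= sum_n_m a n m.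
Proof.
  intros Ha n m Hnm; induction Hnm as [|m Hnm IH]; [now rewrite sum_n_n|].
  rewrite sum_n_Sm by lia.
  replace (f (S (S m)) - f n) with ((f (S (S m)) - f (S m)) + (f (S m) - f n)) by ring.
  eapply Rle_trans; [apply Rabs_triang|].
  specialize (Ha (S m)); change (plus ?u ?v) with (u + v); lra.
Qed.

Lemma CVU_dom_of_summable_steps (f : nat -> R -> R) (a : nat -> R) D :
  ex_series a -> (forall n x, D x -> Rabs (f (S n) x - f n x) <= a n) ->
  CVU_dom f D.
Proof.
  intros Ha Hf; apply CVU_dom_cauchy; intros eps.
  destruct (Cauchy_ex_series a Ha eps) as [N HN]; exists N.
  intros n m x Hx Hn Hm.
  assert (Hlt : forall p q, (N <= p)%nat -> (p < q)%nat -> Rabs (f q x - f p x) < eps).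
  { intros p [|q] Hp Hpq; [lia|].
    eapply Rle_lt_trans; [apply (Rabs_sub_le_sum_n_m (fun k => f k x) a); auto; lia|].
    eapply Rle_lt_trans; [apply Rle_abs|]; apply (HN p q); lia. }
  destruct (Compare_dec.lt_eq_lt_dec n m) as [[Hnm|<-]|Hmn].
  - rewrite Rabs_minus_sym; auto.
  - rewrite Rminus_eq_0, Rabs_R0; apply cond_pos.
  - auto.
Qed.

Lemma continuous_Lim_seq_CVU (f : nat -> R -> R) (t : R) :
  (forall n s, continuous (f n) s) -> CVU_dom f (fun _ => True) ->
  continuous (fun t => real (Lim_seq (fun n => f n t))) t.
Proof.
  intros Hf Hcvu; apply continuity_pt_filterlim.
  apply (CVU_cont_open f (fun _ => True)); auto; [apply open_true|].
  intros n s _; apply continuity_pt_filterlim, Hf.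
Qed.

Lemma is_lim_seq_RInt_lipschitz2 G K (f g : nat -> R -> R) t :
  0 <= K -> 0 <= t -> lipschitz2 G K ->
  (forall n s, continuous (f n) s) -> (forall n s, continuous (g n) s) ->
  CVU_dom f (fun _ => True) -> CVU_dom g (fun _ => True) ->
  is_lim_seq (fun n => RInt (fun s => G (f n s) (g n s)) 0 t)
    (RInt (fun s => G (Lim_seq (fun n => f n s)) (Lim_seq (fun n => g n s))) 0 t).
Proof.
  intros HK Ht HG Cf Cg Uf Ug; apply is_lim_seq_Reals; intros e He.
  assert (He' : 0 < e / (2 * (K * t + 1))) by (apply Rdiv_lt_0_compat; nra).
  destruct (Uf (mkposreal _ He')) as [N1 HN1]; destruct (Ug (mkposreal _ He')) as [N2 HN2].
  exists (N1 + N2)%nat; intros n Hn; unfold R_dist.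
  eapply Rle_lt_trans.
  - apply (Rabs_RInt_sub_le _ _ (fun _ => K * (2 * (e / (2 * (K * t + 1)))))); auto;
      try apply ex_RInt_continuous_all; intros s;
      try (apply (lipschitz2_continuous _ K); auto; now apply continuous_Lim_seq_CVU).
    + apply continuous_const.
    + intros _; eapply Rle_trans; [apply HG|]; apply Rmult_le_compat_l; auto.
      specialize (HN1 n ltac:(lia) s I); specialize (HN2 n ltac:(lia) s I); simpl in *; lra.
  - rewrite RInt_const; unfold scal; simpl; unfold mult; simpl.
    replace ((t - 0) * (K * (2 * (e / (2 * (K * t + 1))))))
      with (e - e / (K * t + 1)) by (field; nra).
    assert (0 < e / (K * t + 1)) by (apply Rdiv_lt_0_compat; nra); lra.
Qed.

Section Picard.

Variables (G1 G2 : R -> R -> R) (K T x0 y0 : R).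
Hypotheses (HK : 0 <= K) (HT : 0 <= T) (HG1 : lipschitz2 G1 K) (HG2 : lipschitz2 G2 K).

(* Iterates are evaluated at [clamp 0 T s]: this keeps them continuous on all of R while the
   estimates, which only hold on [0, T], become uniform in s. *)
Definition picard_map (c : R) (G : R -> R -> R) (u v : R -> R) (t : R) : R :=
  c + RInt (fun s => G (u (clamp 0 T s)) (v (clamp 0 T s))) 0 t.

Fixpoint picard (n : nat) : (R -> R) * (R -> R) :=
  match n with
  | O => (fun _ => x0, fun _ => y0)
  | S n => (picard_map x0 G1 (fst (picard n)) (snd (picard n)),
            picard_map y0 G2 (fst (picard n)) (snd (picard n)))
  end.

Lemma continuous_comp_clamp (u : R -> R) s :
  (forall s, continuous u s) -> continuous (fun s => u (clamp 0 T s)) s.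
Proof. intros Hu; apply (continuous_comp (clamp 0 T)); [apply continuous_clamp|apply Hu]. Qed.

Lemma continuous_picard_map c G u v t :
  lipschitz2 G K -> (forall s, continuous u s) -> (forall s, continuous v s) ->
  continuous (picard_map c G u v) t.
Proof.
  intros HG Hu Hv; apply continuous_plus_RInt; intros s.
  apply (lipschitz2_continuous _ K); auto; now apply continuous_comp_clamp.
Qed.

Lemma continuous_picard n :
  (forall t, continuous (fst (picard n)) t) /\ (forall t, continuous (snd (picard n)) t).
Proof.
  induction n as [|n [IHx IHy]]; simpl.
  - split; intros; apply continuous_const.
  - split; intros; now apply continuous_picard_map.
Qed.

Lemma picard_map_sub_le c G u v u' v' t :
  lipschitz2 G K ->
  (forall s, continuous u s) -> (forall s, continuous v s) ->
  (forall s, continuous u' s) -> (forall s, continuous v' s) ->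
  0 <= t <= T ->
  Rabs (picard_map c G u v t - picard_map c G u' v' t)
    <= K * RInt (fun s => Rabs (u s - u' s) + Rabs (v s - v' s)) 0 t.
Proof.
  intros HG Hu Hv Hu' Hv' Ht; unfold picard_map.
  replace (c + _ - (c + _)) with
    (RInt (fun s => G (u (clamp 0 T s)) (v (clamp 0 T s))) 0 t
     - RInt (fun s => G (u' (clamp 0 T s)) (v' (clamp 0 T s))) 0 t) by ring.
  rewrite <- (RInt_scal (fun s => Rabs (u s - u' s) + Rabs (v s - v' s)))
    by (apply ex_RInt_continuous_all; intros s;
        apply (continuous_plus (fun s => Rabs (u s - u' s))); apply continuous_Rabs_sub; auto).
  apply Rabs_RInt_sub_le; try lra; try apply ex_RInt_continuous_all; intros s.
  - apply (lipschitz2_continuous _ K); auto; now apply continuous_comp_clamp.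
  - apply (lipschitz2_continuous _ K); auto; now apply continuous_comp_clamp.
  - apply (continuous_scal_r K (fun s => Rabs (u s - u' s) + Rabs (v s - v' s))).
    apply (continuous_plus (fun s => Rabs (u s - u' s))); apply continuous_Rabs_sub; auto.
  - intros Hs; rewrite !clamp_id by lra; apply HG.
Qed.

Definition picard_gap (n : nat) (t : R) : R :=
  Rabs (fst (picard (S n)) t - fst (picard n) t) + Rabs (snd (picard (S n)) t - snd (picard n) t).

Let M := Rabs (G1 x0 y0) + Rabs (G2 x0 y0).

Lemma picard_gap_le n t :
  0 <= t <= T -> picard_gap n t <= M * (2 * K) ^ n / INR (fact (S n)) * t ^ S n.
Proof.
  revert t; induction n as [|n IH]; intros t Ht.
  - unfold picard_gap; simpl; unfold picard_map; rewrite !RInt_const.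
    unfold scal; simpl; unfold mult; simpl.
    replace (x0 + (t - 0) * G1 x0 y0 - x0) with (t * G1 x0 y0) by ring.
    replace (y0 + (t - 0) * G2 x0 y0 - y0) with (t * G2 x0 y0) by ring.
    rewrite !Rabs_mult, (Rabs_right t) by lra; unfold M; lra.
  - destruct (continuous_picard n) as [Cx Cy].
    destruct (continuous_picard (S n)) as [Cx' Cy'].
    assert (Hgap : forall s, continuous (picard_gap n) s).
    { intros s; apply (continuous_plus (fun s => Rabs (fst (picard (S n)) s - fst (picard n) s)));
        apply continuous_Rabs_sub; auto. }
    set (C := M * (2 * K) ^ n / INR (fact (S n))) in IH.
    assert (Hint : RInt (picard_gap n) 0 t <= C * t ^ S (S n) / INR (S (S n))).
    { rewrite <- RInt_scal_pow; apply RInt_le; try lra; try apply ex_RInt_continuous_all; auto.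
      - intros s; apply (continuous_scal_r C (fun s => s ^ S n)).
        apply (@ex_derive_continuous R_AbsRing R_NormedModule); auto_derive; auto.
      - intros s Hs; apply IH; lra. }
    unfold picard_gap at 1; cbn [picard fst snd].
    eapply Rle_trans; [apply Rplus_le_compat; apply picard_map_sub_le; auto|].
    fold (picard_gap n).
    eapply Rle_trans; [apply Rplus_le_compat; apply Rmult_le_compat_l; eauto|].
    unfold C; rewrite (fact_simpl (S n)), mult_INR.
    assert (INR (fact (S n)) <> 0) by apply INR_fact_neq_0.
    assert (INR (S (S n)) <> 0) by (apply not_0_INR; lia).
    right; simpl pow; field; auto.
Qed.

Lemma picard_gap_le_exp_term n t :
  0 <= t <= T -> picard_gap n t <= M * T * (2 * K * T) ^ n / INR (fact n).
Proof.
  intros Ht; eapply Rle_trans; [now apply picard_gap_le|].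
  assert (HM : 0 <= M) by (unfold M; generalize (Rabs_pos (G1 x0 y0)) (Rabs_pos (G2 x0 y0)); lra).
  assert (Hf : 0 < INR (fact n)) by apply INR_fact_lt_0.
  assert (Hfact : INR (fact n) <= INR (fact (S n))) by (apply le_INR, fact_le; lia).
  assert (Htn : t ^ S n <= T ^ S n) by (apply pow_incr; lra).
  assert (HC : 0 <= M * (2 * K) ^ n) by (apply Rmult_le_pos; [|apply pow_le]; lra).
  replace (M * T * (2 * K * T) ^ n / INR (fact n)) with (M * (2 * K) ^ n / INR (fact n) * T ^ S n)
    by (rewrite (Rpow_mult_distr (2 * K) T); simpl; field; apply Rgt_not_eq, Hf).
  apply Rmult_le_compat; try apply pow_le; try lra.
  - apply Rmult_le_pos; auto; apply Rlt_le, Rinv_0_lt_compat; lra.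
  - apply Rmult_le_compat_l; auto; apply Rinv_le_contravar; lra.
Qed.

Lemma picard_CVU :
  CVU_dom (fun n t => fst (picard n) (clamp 0 T t)) (fun _ => True) /\
  CVU_dom (fun n t => snd (picard n) (clamp 0 T t)) (fun _ => True).
Proof.
  assert (Hgap : forall n t, picard_gap n (clamp 0 T t) <= M * T * (2 * K * T) ^ n / INR (fact n))
    by (intros; apply picard_gap_le_exp_term, clamp_in; lra).
  split; apply (CVU_dom_of_summable_steps _ _ _ (ex_series_exp_terms (M * T) (2 * K * T)));
    intros n t _; apply Rle_trans with (picard_gap n (clamp 0 T t)); auto; unfold picard_gap;
    generalize (Rabs_pos (fst (picard (S n)) (clamp 0 T t) - fst (picard n) (clamp 0 T t)))
      (Rabs_pos (snd (picard (S n)) (clamp 0 T t) - snd (picard n) (clamp 0 T t))); lra.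
Qed.

Definition picard_lim_x (u : R) : R := Lim_seq (fun n => fst (picard n) u).
Definition picard_lim_y (u : R) : R := Lim_seq (fun n => snd (picard n) u).

Lemma continuous_picard_lim t :
  continuous (fun t => picard_lim_x (clamp 0 T t)) t /\
  continuous (fun t => picard_lim_y (clamp 0 T t)) t.
Proof.
  destruct picard_CVU as [Ux Uy].
  split; apply (continuous_Lim_seq_CVU (fun n t => _ (picard n) (clamp 0 T t))); auto;
    intros n s; apply continuous_comp_clamp, continuous_picard.
Qed.

Lemma picard_lim_fixed_point (c : R) (G : R -> R -> R) (w : nat -> R -> R) t :
  lipschitz2 G K -> (forall n, w (S n) = picard_map c G (fst (picard n)) (snd (picard n))) ->
  0 <= t <= T ->
  real (Lim_seq (fun n => w n t)) = picard_map c G picard_lim_x picard_lim_y t.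
Proof.
  intros HG Hw Ht; destruct picard_CVU as [Ux Uy].
  rewrite <- Lim_seq_incr_1, (Lim_seq_ext _ _ (fun n => f_equal (fun h => h t) (Hw n))).
  rewrite (is_lim_seq_unique _ (picard_map c G picard_lim_x picard_lim_y t)); [reflexivity|].
  apply is_lim_seq_plus'; [apply is_lim_seq_const|].
  apply (is_lim_seq_RInt_lipschitz2 G K (fun n s => fst (picard n) (clamp 0 T s))
                                        (fun n s => snd (picard n) (clamp 0 T s))); auto; try lra;
    intros n s; apply continuous_comp_clamp, continuous_picard.
Qed.

Theorem lipschitz_ode_exists :
  exists X Y : R -> R, X 0 = x0 /\ Y 0 = y0 /\
    forall t, 0 <= t <= T -> is_derive X t (G1 (X t) (Y t)) /\ is_derive Y t (G2 (X t) (Y t)).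
Proof.
  set (X := picard_map x0 G1 picard_lim_x picard_lim_y).
  set (Y := picard_map y0 G2 picard_lim_x picard_lim_y).
  assert (Hfix : forall t, 0 <= t <= T -> picard_lim_x t = X t /\ picard_lim_y t = Y t).
  { intros t Ht; split.
    - now apply (picard_lim_fixed_point x0 G1 (fun n => fst (picard n))).
    - now apply (picard_lim_fixed_point y0 G2 (fun n => snd (picard n))). }
  assert (Hcont : forall G, lipschitz2 G K -> forall s,
             continuous (fun s => G (picard_lim_x (clamp 0 T s)) (picard_lim_y (clamp 0 T s))) s).
  { intros G HG s; apply (lipschitz2_continuous G K); auto; apply continuous_picard_lim. }
  exists X, Y; split; [|split];
    [unfold X, Y, picard_map; rewrite RInt_point; unfold zero; simpl; ring ..|].
  intros t Ht.
  assert (Hd : forall c G, lipschitz2 G K ->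
             is_derive (picard_map c G picard_lim_x picard_lim_y) t
               (G (picard_lim_x t) (picard_lim_y t))).
  { intros c G HG.
    replace (G (picard_lim_x t) (picard_lim_y t))
      with (G (picard_lim_x (clamp 0 T t)) (picard_lim_y (clamp 0 T t))) by (now rewrite clamp_id).
    apply (is_derive_plus_RInt
             (fun s => G (picard_lim_x (clamp 0 T s)) (picard_lim_y (clamp 0 T s)))), Hcont, HG. }
  destruct (Hfix t Ht) as [<- <-]; split; now apply Hd.
Qed.

End Picard.

(** * The truncated system and its a priori bounds *)

Lemma Rabs_clamp_sym b u : 0 <= b -> Rabs (clamp (- b) b u) <= b.
Proof. intros Hb; apply Rabs_le, clamp_in; lra. Qed.

Lemma Rabs_mult_sub_le (A B A' B' c : R) :
  Rabs A' <= c -> Rabs B <= c -> Rabs (A * B - A' * B') <= c * (Rabs (A - A') + Rabs (B - B')).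
Proof.
  intros HA HB; replace (A * B - A' * B') with ((A - A') * B + A' * (B - B')) by ring.
  eapply Rle_trans; [apply Rabs_triang|]; rewrite !Rabs_mult.
  generalize (Rabs_pos (A - A')) (Rabs_pos (B - B')); nra.
Qed.

Definition trunc_x (a b u v : R) : R := - u + clamp (- a) a u ^ 2 + clamp (- b) b v ^ 2.
Definition trunc_y (a b u v : R) : R := clamp (- b) b v * (clamp (- a) a u + clamp (- b) b v).

Lemma trunc_x_lipschitz a b : 0 <= a <= 1/2 -> 0 <= b <= 1/2 -> lipschitz2 (trunc_x a b) 2.
Proof.
  intros Ha Hb u v u' v'; unfold trunc_x.
  assert (HA := clamp_sub_le (- a) a u u'); assert (HB := clamp_sub_le (- b) b v v').
  set (A := clamp (- a) a u) in *; set (A' := clamp (- a) a u') in *.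
  set (B := clamp (- b) b v) in *; set (B' := clamp (- b) b v') in *.
  assert (Rabs A <= a) by (apply Rabs_clamp_sym; lra).
  assert (Rabs A' <= a) by (apply Rabs_clamp_sym; lra).
  assert (Rabs B <= b) by (apply Rabs_clamp_sym; lra).
  assert (Rabs B' <= b) by (apply Rabs_clamp_sym; lra).
  assert (HA2 : Rabs (A ^ 2 - A' ^ 2) <= Rabs (u - u')).
  { simpl; rewrite !Rmult_1_r.
    eapply Rle_trans; [apply (Rabs_mult_sub_le _ _ _ _ (1/2)); lra|]; lra. }
  assert (HB2 : Rabs (B ^ 2 - B' ^ 2) <= Rabs (v - v')).
  { simpl; rewrite !Rmult_1_r.
    eapply Rle_trans; [apply (Rabs_mult_sub_le _ _ _ _ (1/2)); lra|]; lra. }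
  replace (- u + A ^ 2 + B ^ 2 - (- u' + A' ^ 2 + B' ^ 2))
    with (- (u - u') + (A ^ 2 - A' ^ 2) + (B ^ 2 - B' ^ 2)) by ring.
  eapply Rle_trans; [apply Rabs_triang|]; eapply Rle_trans; [apply Rplus_le_compat_r, Rabs_triang|].
  rewrite Rabs_Ropp; generalize (Rabs_pos (u - u')) (Rabs_pos (v - v')); lra.
Qed.

Lemma trunc_y_lipschitz a b : 0 <= a <= 1/2 -> 0 <= b <= 1/2 -> lipschitz2 (trunc_y a b) 2.
Proof.
  intros Ha Hb u v u' v'; unfold trunc_y.
  assert (HA := clamp_sub_le (- a) a u u'); assert (HB := clamp_sub_le (- b) b v v').
  set (A := clamp (- a) a u) in *; set (A' := clamp (- a) a u') in *.
  set (B := clamp (- b) b v) in *; set (B' := clamp (- b) b v') in *.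
  assert (Rabs A <= a) by (apply Rabs_clamp_sym; lra).
  assert (Rabs B <= b) by (apply Rabs_clamp_sym; lra).
  assert (Rabs B' <= b) by (apply Rabs_clamp_sym; lra).
  assert (Rabs (A + B) <= 1) by (eapply Rle_trans; [apply Rabs_triang|lra]).
  assert (Rabs (A + B - (A' + B')) <= Rabs (u - u') + Rabs (v - v'))
    by (replace (A + B - (A' + B')) with ((A - A') + (B - B')) by ring;
        eapply Rle_trans; [apply Rabs_triang|lra]).
  eapply Rle_trans; [apply (Rabs_mult_sub_le _ _ _ _ 1); lra|].
  generalize (Rabs_pos (u - u')) (Rabs_pos (v - v')); lra.
Qed.

Lemma mul_trunc_y_le a b u v :
  0 <= a -> 0 <= b -> v * trunc_y a b u v <= v ^ 2 * (Rabs u + b).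
Proof.
  intros Ha Hb; unfold trunc_y.
  assert (Hcx := Rabs_clamp_le (- a) a u ltac:(lra)).
  assert (Hcy := Rabs_clamp_le (- b) b v ltac:(lra)).
  assert (Hcy' := Rabs_clamp_sym b v Hb).
  set (cx := clamp (- a) a u) in *; set (cy := clamp (- b) b v) in *.
  assert (Rabs (cx + cy) <= Rabs u + b) by (eapply Rle_trans; [apply Rabs_triang|lra]).
  eapply Rle_trans; [apply Rle_abs|]; rewrite !Rabs_mult, <- pow2_abs.
  replace (Rabs v ^ 2 * (Rabs u + b)) with (Rabs v * (Rabs v * (Rabs u + b))) by ring.
  apply Rmult_le_compat_l, Rmult_le_compat; auto using Rabs_pos.
Qed.

Lemma le_initial_of_derive_nonpos (h dh : R -> R) T :
  (forall t, 0 <= t <= T -> is_derive h t (dh t)) ->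
  (forall t, 0 <= t <= T -> dh t <= 0) ->
  forall t, 0 <= t <= T -> h t <= h 0.
Proof.
  intros Hd Hn t Ht.
  destruct (Req_dec t 0) as [->|Ht0]; [lra|].
  destruct (MVT_gen h 0 t dh) as [c [Hc E]]; rewrite ?Rmin_left, ?Rmax_right in * by lra.
  - intros s Hs; apply Hd; lra.
  - intros s Hs; apply continuity_pt_filterlim, (@ex_derive_continuous R_AbsRing R_NormedModule).
    eexists; apply Hd; lra.
  - assert (dh c <= 0) by (apply Hn; lra); nra.
Qed.

Lemma exp_half_sqr t : exp (t / 2) * exp (t / 2) = exp t.
Proof. rewrite <- exp_plus; f_equal; field. Qed.

Lemma exp_half_inv t : exp (t / 2) * exp (- (t / 2)) = 1.
Proof. rewrite <- exp_plus, Rplus_opp_r; apply exp_0. Qed.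

Lemma exp_neg_half_le_1 t : 0 <= t -> exp (- (t / 2)) <= 1.
Proof.
  intros Ht; generalize (exp_ineq1_le (t / 2)) (exp_half_inv t) (exp_pos (- (t / 2))); nra.
Qed.

Lemma sqr_clamp_le_half_abs u : clamp (- (1/2)) (1/2) u ^ 2 <= Rabs u / 2.
Proof.
  assert (H1 := Rabs_clamp_sym (1/2) u ltac:(lra)).
  assert (H2 := Rabs_clamp_le (- (1/2)) (1/2) u ltac:(lra)).
  rewrite <- pow2_abs; generalize (Rabs_pos (clamp (- (1/2)) (1/2) u)); nra.
Qed.

Section APriori.

Variables (eps delta T x0 y0 : R) (X Y : R -> R).
Hypotheses (Heps : eps <= 1/24) (Hdelta : 0 < delta <= 1/24) (HT : delta * T <= 1/12)
  (Hx0 : Rabs x0 <= eps) (Hy0 : Rabs y0 <= delta) (HX0 : X 0 = x0) (HY0 : Y 0 = y0).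

Let b := 2 * delta.

Hypothesis HXY : forall t, 0 <= t <= T ->
  is_derive X t (trunc_x (1/2) b (X t) (Y t)) /\ is_derive Y t (trunc_y (1/2) b (X t) (Y t)).

Lemma X_lower_bound t : 0 <= t <= T -> - eps <= exp t * X t.
Proof.
  intros Ht.
  enough (- (exp t * X t) <= - (exp 0 * X 0))
    by (rewrite exp_0, HX0 in H; apply Rabs_le_between in Hx0; lra).
  apply (le_initial_of_derive_nonpos (fun s => - (exp s * X s))
           (fun s => - (exp s * X s + exp s * trunc_x (1/2) b (X s) (Y s))) T); auto.
  - intros s Hs; destruct (HXY s Hs) as [DX _].
    auto_derive; [eexists; exact DX|]; erewrite is_derive_unique by exact DX; ring.
  - intros s _; unfold trunc_x.
    generalize (exp_pos s) (pow2_ge_0 (clamp (- (1/2)) (1/2) (X s)))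
      (pow2_ge_0 (clamp (- b) b (Y s))); nra.
Qed.

Lemma X_upper_bound t : 0 <= t <= T -> exp (t / 2) * X t <= 3 * eps + 2 * b ^ 2 * exp (t / 2).
Proof.
  intros Ht.
  assert (Heps0 : 0 <= eps) by (generalize (Rabs_pos x0); lra).
  enough (exp (t / 2) * X t + 2 * eps * exp (- (t / 2)) - 2 * b ^ 2 * exp (t / 2)
          <= exp (0 / 2) * X 0 + 2 * eps * exp (- (0 / 2)) - 2 * b ^ 2 * exp (0 / 2)) as H.
  { replace (0 / 2) with 0 in H by field; rewrite Ropp_0, exp_0, HX0 in H.
    apply Rabs_le_between in Hx0; generalize (exp_pos (- (t / 2))) (pow2_ge_0 b); nra. }
  apply (le_initial_of_derive_nonpos
           (fun s => exp (s / 2) * X s + 2 * eps * exp (- (s / 2)) - 2 * b ^ 2 * exp (s / 2))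
           (fun s => exp (s / 2) * (- X s / 2 + clamp (- (1/2)) (1/2) (X s) ^ 2
                                    + clamp (- b) b (Y s) ^ 2 - b ^ 2) - eps * exp (- (s / 2))) T);
    auto.
  - intros s Hs; destruct (HXY s Hs) as [DX _].
    auto_derive; [eexists; exact DX|]; erewrite is_derive_unique by exact DX.
    unfold trunc_x, Rdiv; field.
  - intros s Hs.
    assert (Hlow := X_lower_bound s Hs); rewrite <- exp_half_sqr in Hlow.
    assert (Huv := exp_half_inv s).
    set (u := exp (s / 2)) in *; set (v := exp (- (s / 2))) in *.
    assert (Hu : 0 < u) by apply exp_pos; assert (Hv : 0 < v) by apply exp_pos.
    assert (Hcx := sqr_clamp_le_half_abs (X s)).
    assert (Hcy : clamp (- b) b (Y s) ^ 2 <= b ^ 2)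
      by (apply pow_maj_Rabs, Rabs_clamp_sym; unfold b; lra).
    assert (Hneg : u * (- X s / 2 + Rabs (X s) / 2) <= eps * v).
    { destruct (Rle_dec 0 (X s)).
      - rewrite Rabs_right by lra; nra.
      - rewrite Rabs_left by lra.
        assert (E : u * X s = u * u * X s * v)
          by (replace (u * u * X s * v) with (u * X s * (u * v)) by ring; rewrite Huv; ring).
        nra. }
    nra.
Qed.

Lemma Rabs_X_le t : 0 <= t <= T -> Rabs (X t) <= 3 * eps * exp (- (t / 2)) + 2 * b ^ 2.
Proof.
  intros Ht.
  assert (Hlow := X_lower_bound t Ht); assert (Hup := X_upper_bound t Ht).
  rewrite <- exp_half_sqr in Hlow; assert (Huv := exp_half_inv t).
  set (u := exp (t / 2)) in *; set (v := exp (- (t / 2))) in *.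
  assert (Hu : 0 < u) by apply exp_pos; assert (Hv : 0 < v) by apply exp_pos.
  assert (Hv1 : v <= 1) by (apply exp_neg_half_le_1; lra).
  assert (E1 : X t = u * X t * v)
    by (replace (u * X t * v) with (X t * (u * v)) by ring; rewrite Huv; ring).
  assert (E2 : X t = u * u * X t * (v * v))
    by (replace (u * u * X t * (v * v)) with (X t * (u * v) * (u * v)) by ring; rewrite Huv; ring).
  apply Rabs_le_between; split; nra.
Qed.

(* [Q' = 2 (3 eps e^{-t/2} + 2 b^2 + b)] dominates [2 (|X| + b)] by [Rabs_X_le]. *)
Let Q (t : R) : R := 12 * eps * (1 - exp (- (t / 2))) + 2 * (2 * b ^ 2 + b) * t.

Lemma Y_sqr_le t : 0 <= t <= T -> Y t ^ 2 * exp (- Q t) <= y0 ^ 2.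
Proof.
  intros Ht.
  enough (Y t ^ 2 * exp (- Q t) <= Y 0 ^ 2 * exp (- Q 0)) as H.
  { unfold Q in H; replace (0 / 2) with 0 in H by field.
    rewrite Ropp_0, exp_0, HY0, Rminus_eq_0, Rmult_0_r, Rmult_0_r, Rplus_0_r, Ropp_0, exp_0,
      Rmult_1_r in H; exact H. }
  apply (le_initial_of_derive_nonpos (fun s => Y s ^ 2 * exp (- Q s))
           (fun s => exp (- Q s) * (2 * Y s * trunc_y (1/2) b (X s) (Y s)
                      - Y s ^ 2 * (6 * eps * exp (- (s / 2)) + 2 * (2 * b ^ 2 + b)))) T); auto.
  - intros s Hs; destruct (HXY s Hs) as [_ DY].
    unfold Q; auto_derive; [eexists; exact DY|]; erewrite is_derive_unique by exact DY.
    unfold Rminus, Rdiv; simpl pow; field.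
  - intros s Hs.
    assert (HXs := Rabs_X_le s Hs).
    assert (Hy := mul_trunc_y_le (1/2) b (X s) (Y s) ltac:(lra) ltac:(unfold b; lra)).
    assert (Y s ^ 2 * (Rabs (X s) - 3 * eps * exp (- (s / 2)) - 2 * b ^ 2) <= 0)
      by (generalize (pow2_ge_0 (Y s)); nra).
    generalize (exp_pos (- Q s)); nra.
Qed.

Lemma truncation_inactive t : 0 <= t <= T -> Rabs (X t) <= 1/2 /\ Rabs (Y t) <= b.
Proof.
  intros Ht.
  assert (Heps0 : 0 <= eps) by (generalize (Rabs_pos x0); lra).
  assert (Hv : 0 < exp (- (t / 2))) by apply exp_pos.
  assert (Hv1 := exp_neg_half_le_1 t ltac:(lra)).
  split.
  - eapply Rle_trans; [now apply Rabs_X_le|]; unfold b; nra.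
  - assert (HQ : Q t <= 1).
    { assert (2 * (2 * b ^ 2 + b) * t <= 2 * (2 * b ^ 2 + b) * T)
        by (apply Rmult_le_compat_l; [unfold b; nra|lra]).
      unfold Q, b in *; nra. }
    assert (HeQ : exp (Q t) <= 3).
    { eapply Rle_trans; [|apply exp_le_3].
      destruct (Rle_lt_or_eq_dec _ _ HQ) as [HQ1|HQ1];
        [left; now apply exp_increasing|now rewrite HQ1; right]. }
    assert (HY := Y_sqr_le t Ht).
    assert (EQ : exp (- Q t) * exp (Q t) = 1) by (rewrite <- exp_plus, Rplus_opp_l; apply exp_0).
    assert (Hy2 : y0 ^ 2 <= delta ^ 2) by now apply pow_maj_Rabs.
    assert (HYt : Y t ^ 2 <= y0 ^ 2 * exp (Q t)).
    { replace (Y t ^ 2) with (Y t ^ 2 * exp (- Q t) * exp (Q t)) by (rewrite Rmult_assoc, EQ; ring).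
      apply Rmult_le_compat_r; [left; apply exp_pos|exact HY]. }
    rewrite <- (Rabs_right b) by (unfold b; lra); apply Rsqr_le_abs_0; unfold Rsqr, b.
    generalize (pow2_ge_0 y0) (exp_pos (Q t)); nra.
Qed.

End APriori.

Theorem proposition1p3 :
  exists eps0 : R, 0 < eps0 /\
  exists c : R, 0 < c /\
  forall eps delta : R, 0 < delta -> delta <= eps -> eps <= eps0 ->
  forall x0 y0 : R, Rabs x0 <= eps -> Rabs y0 <= delta ->
  exists T : R, c / delta <= T /\
  exists x y : R -> R, solves_on T x0 y0 x y.
Proof.
  exists (1/24); split; [lra|]; exists (1/12); split; [lra|].
  intros eps delta Hdelta Hde Heps x0 y0 Hx0 Hy0.
  set (T := 1 / 12 / delta); exists T; split; [lra|].
  assert (HT0 : 0 <= T) by (apply Rlt_le, Rdiv_lt_0_compat; lra).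
  assert (HdT : delta * T <= 1/12) by (right; unfold T; field; lra).
  destruct (lipschitz_ode_exists (trunc_x (1/2) (2 * delta)) (trunc_y (1/2) (2 * delta)) 2 T x0 y0
              ltac:(lra) HT0 (trunc_x_lipschitz (1/2) (2 * delta) ltac:(lra) ltac:(lra))
              (trunc_y_lipschitz (1/2) (2 * delta) ltac:(lra) ltac:(lra)))
    as [X [Y [HX0 [HY0 HXY]]]].
  exists X, Y; split; [|split]; auto; intros t Ht.
  destruct (truncation_inactive eps delta T x0 y0 X Y ltac:(lra) ltac:(lra) HdT
              Hx0 Hy0 HX0 HY0 HXY t Ht) as [HXt HYt].
  apply Rabs_le_between in HXt; apply Rabs_le_between in HYt.
  destruct (HXY t Ht) as [DX DY]; unfold trunc_x, trunc_y in DX, DY.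
  rewrite !clamp_id in DX, DY by lra; auto.
Qed.
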